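(* $I^*$ is a non-trivial Borel $\sigma$-ideal on $\mathbf{Tr}$ which does not satisfy ccc but satisfies the $\omega_2$-chain condition: there is no family of $\omega_2$ Borel sets not in $I^*$ whose pairwise intersections all belong to $I^*$.
   Context: $\mathbf{Tr}$ is the set of all subtrees of $\omega^{<\omega}$ (subsets closed under initial segments), a closed subspace of $2^{(\omega^{<\omega})}$ with the product topology. $\mathbf{Trw}\subseteq\mathbf{Tr}$ is the set of well-founded trees. For $T\in\mathbf{Trw}$, $h_T:T\to\omega_1$ is the canonical rank function: $h_T(\nu)=\sup\{h_T(\nu')+1:\nu'\in T \text{ an immediate successor of }\nu\}$. For $\alpha<\omega_1$, $A_\alpha=\{T\in\mathbf{Trw}: h_T(\langle\rangle)=\alpha\}$. For $n\in\omega$ let $n^{\le n}$ be the set of sequences of length $\le n$ with values $<n$. $\tau_\alpha$ is the topology on $A_\alpha$ with basis the sets $U(n,T)=\{T'\in A_\alpha: T'\cap n^{\le n}=T\cap n^{\le n} \text{ and } h_{T'}\restriction (T\cap n^{\le n})=h_T\restriction(T\cap n^{\le n})\}$ for $T\in A_\alpha$, $n\in\omega$. $I^*$ is the family of all subsets of Borel sets $B\subseteq\mathbf{Tr}$ such that $B\cap A_\alpha$ is $\tau_\alpha$-meager for every $0<\alpha<\omega_1$. An ideal satisfies ccc if every family of pairwise disjoint Borel sets not in the ideal is countable. *)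

(* Points of 2^(omega^{<omega}) are functions  list nat -> bool. *)
From Stdlib Require Import List Arith.
Import ListNotations.

Definition pt := list nat -> bool.
Definition pset := pt -> Prop.

(* product topology: U is open iff membership of each point is witnessed
   by finitely many coordinates *)
Definition is_open (U : pset) : Prop :=
  forall x, U x -> exists l : list (list nat),
    forall y, (forall s, In s l -> y s = x s) -> U y.

Inductive borel : pset -> Prop :=
| borel_open U : is_open U -> borel U
| borel_compl U : borel U -> borel (fun x => ~ U x)
| borel_union (F : nat -> pset) :
    (forall n, borel (F n)) -> borel (fun x => exists n, F n x).

Definition Tr : pset := fun T => forall s t, T (s ++ t) = true -> T s = true.

Definition subset (A B : pset) : Prop := forall x, A x -> B x.

(* Borel subsets of Tr (Tr is closed, so these are the Borel sets of the subspace) *)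
Definition borel_Tr (B : pset) : Prop := borel B /\ subset B Tr.

Definition Trw : pset := fun T =>
  Tr T /\ ~ exists f : nat -> nat, forall n, T (map f (seq 0 n)) = true.

Inductive Ord : Type :=
| OZ : Ord
| OS : Ord -> Ord
| OL : (nat -> Ord) -> Ord.   (* OL f = sup_n f n *)

Inductive ole : Ord -> Ord -> Prop :=
| ole_zero x : ole OZ x
| ole_trans x y z : ole x y -> ole y z -> ole x z
| ole_succ x y : ole x y -> ole (OS x) (OS y)
| ole_cocone x f k : ole x (f k) -> ole x (OL f)
| ole_limiting f x : (forall k, ole (f k) x) -> ole (OL f) x.

Definition oeq (x y : Ord) : Prop := ole x y /\ ole y x.
Definition olt (x y : Ord) : Prop := ole x y /\ ~ ole y x.

Definition is_rank (T : pt) (h : list nat -> Ord) : Prop :=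
  forall s, T s = true ->
    oeq (h s) (OL (fun n => if T (s ++ [n]) then OS (h (s ++ [n])) else OZ)).

Definition rank_is (T : pt) (s : list nat) (o : Ord) : Prop :=
  exists h, is_rank T h /\ oeq (h s) o.

Definition same_rank (T T' : pt) (s : list nat) : Prop :=
  exists o, rank_is T s o /\ rank_is T' s o.

Definition A (alpha : Ord) : pset := fun T =>
  Trw T /\ T [] = true /\ rank_is T [] alpha.

Definition small (n : nat) (s : list nat) : Prop :=
  length s <= n /\ Forall (fun k => k < n) s.

Definition U (alpha : Ord) (n : nat) (T : pt) : pset := fun T' =>
  A alpha T' /\
  (forall s, small n s -> T' s = T s) /\
  (forall s, small n s -> T s = true -> same_rank T' T s).

Definition tau_open (alpha : Ord) (O : pset) : Prop :=
  subset O (A alpha) /\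
  forall T, O T -> exists n, subset (U alpha n T) O.

Definition nowhere_dense (alpha : Ord) (N : pset) : Prop :=
  forall O, tau_open alpha O -> (exists T, O T) ->
    exists O', tau_open alpha O' /\ (exists T, O' T) /\ subset O' O /\
      (forall T, O' T -> ~ N T).

Definition meager (alpha : Ord) (M : pset) : Prop :=
  exists N : nat -> pset, (forall n, nowhere_dense alpha (N n)) /\
    forall T, M T -> exists n, N n T.

Definition Istar (X : pset) : Prop :=
  exists B, borel_Tr B /\ subset X B /\
    forall alpha, olt OZ alpha ->
      meager alpha (fun T => B T /\ A alpha T).

Definition inter (X Y : pset) : pset := fun T => X T /\ Y T.

Definition sigma_ideal_on_Tr (I : pset -> Prop) : Prop :=
  (forall X, I X -> subset X Tr) /\
  I (fun _ => False) /\
  (forall X Y, I Y -> subset X Y -> I X) /\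
  (forall F : nat -> pset, (forall n, I (F n)) -> I (fun T => exists n, F n T)).

Definition nontrivial (I : pset -> Prop) : Prop :=
  ~ I Tr /\ forall T, Tr T -> I (fun T' => T' = T).

Definition borel_generated (I : pset -> Prop) : Prop :=
  forall X, I X -> exists B, borel_Tr B /\ I B /\ subset X B.

Definition ccc (I : pset -> Prop) : Prop :=
  forall (J : Type) (F : J -> pset),
    (forall j, borel_Tr (F j) /\ ~ I (F j)) ->
    (forall i j, i <> j -> forall T, ~ (F i T /\ F j T)) ->
    exists g : J -> nat, forall i j, g i = g j -> i = j.

(* omega_2-chain condition: every family of Borel sets not in I with pairwise
   intersections in I has size <= aleph_1, i.e. injects into omega_1
   (= Brouwer ordinals modulo oeq) *)
Definition omega2_cc (I : pset -> Prop) : Prop :=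
  forall (J : Type) (F : J -> pset),
    (forall j, borel_Tr (F j) /\ ~ I (F j)) ->
    (forall i j, i <> j -> I (inter (F i) (F j))) ->
    exists g : J -> Ord, forall i j, oeq (g i) (g j) -> i = j.

(* For [alpha > 0] the space [(A_alpha, tau_alpha)] has no isolated points and
   satisfies the Baire category theorem, proved by a fusion argument in which the
   rank of each node is fixed, as soon as the node enters the window, as a
   supremum whose terms are later witnessed by children inside the window.
   Every Borel set has the Baire property there, so [I^*] is a proper
   sigma-ideal containing the singletons. The sets [A_alpha] are Borel, pairwise
   disjoint and not in [I^*], and there are [aleph_1] of them, so ccc fails.
   Conversely, a Borel set outside [I^*] is comeager in some basic open set
   [U(n,T)] of some [tau_alpha]; such a set is determined by [alpha] and finitely
   many natural numbers, and two Borel sets comeager in the same [U(n,T)] have an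
   intersection outside [I^*]. *)

From Stdlib Require Import List Arith Lia Classical ClassicalEpsilon FunctionalExtensionality PropExtensionality Cantor ProofIrrelevance.
Import ListNotations.

(** * Countable ordinals *)

(* A structurally recursive presentation of [ole]: [ord_le x y] recurses on [x]
   and, for a successor [x = OS x'], on [y]. It makes inversion, transitivity and
   well-foundedness provable by plain induction. *)
Fixpoint ord_le (x y : Ord) {struct x} : Prop :=
  match x with
  | OZ => True
  | OS x' => (fix lt_x (y : Ord) : Prop :=
      match y with OZ => False | OS y' => ord_le x' y' | OL g => exists k, lt_x (g k) end) y
  | OL f => forall k, ord_le (f k) y
  end.

Definition ord_lt x y := ord_le (OS x) y.
Definition ord_eq x y := ord_le x y /\ ord_le y x.

Lemma ord_lt_OZ x : ~ ord_lt x OZ. Proof. simpl. auto. Qed.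
Lemma ord_lt_OS x y : ord_lt x (OS y) = ord_le x y. Proof. reflexivity. Qed.
Lemma ord_lt_OL x g : ord_lt x (OL g) = exists k, ord_lt x (g k). Proof. reflexivity. Qed.
Lemma ord_le_OL f y : ord_le (OL f) y = forall k, ord_le (f k) y. Proof. reflexivity. Qed.
Lemma ord_le_OS x y : ord_le (OS x) y = ord_lt x y. Proof. reflexivity. Qed.

Lemma ord_le_cocone x g k : ord_le x (g k) -> ord_le x (OL g).
Proof.
  revert g k. induction x as [|x IH|f IH]; intros g k H.
  - exact I.
  - rewrite ord_le_OS, ord_lt_OL. exists k. exact H.
  - rewrite ord_le_OL in *. intro i. eapply IH. apply H.
Qed.

Lemma ord_le_refl x : ord_le x x.
Proof.
  induction x as [|x IH|f IH].
  - exact I.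
  - exact IH.
  - intro k. eapply ord_le_cocone. apply IH.
Qed.

Lemma ord_le_trans x y z : ord_le x y -> ord_le y z -> ord_le x z.
Proof.
  revert y z. induction x as [|x IHx|f IHf]; intros y z H1 H2.
  - exact I.
  - rewrite ord_le_OS in *. revert z H1 H2.
    induction y as [|y IHy|g IHg]; intros z H1 H2.
    + destruct (ord_lt_OZ _ H1).
    + rewrite ord_lt_OS in H1. rewrite ord_le_OS in H2.
      induction z as [|z IHz|h IHh].
      * destruct (ord_lt_OZ _ H2).
      * rewrite ord_lt_OS in *. eapply IHx; eauto.
      * rewrite ord_lt_OL in *. destruct H2 as [k Hk]. exists k. apply IHh; auto.
    + rewrite ord_lt_OL in H1. destruct H1 as [k Hk]. rewrite ord_le_OL in H2.
      eapply IHg; eauto.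
  - rewrite ord_le_OL in *. intro k. eapply IHf; eauto.
Qed.

Lemma ord_lt_le_trans x y z : ord_lt x y -> ord_le y z -> ord_lt x z.
Proof. apply ord_le_trans. Qed.

Lemma ord_le_succ x : ord_le x (OS x).
Proof.
  induction x as [|x IH|f IH].
  - exact I.
  - exact IH.
  - intro k. eapply ord_le_trans. apply IH. apply (ord_le_cocone _ f k), ord_le_refl.
Qed.

Lemma ord_ltW x y : ord_lt x y -> ord_le x y.
Proof. apply ord_le_trans, ord_le_succ. Qed.

Lemma ord_lt_succ x : ord_lt x (OS x). Proof. apply ord_le_refl. Qed.

Lemma ord_le_lt_trans x y z : ord_le x y -> ord_lt y z -> ord_lt x z.
Proof. intros H1 H2. eapply ord_le_trans; [|exact H2]. exact H1. Qed.

Lemma ole_iff x y : ole x y <-> ord_le x y.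
Proof.
  split.
  - induction 1.
    + exact I.
    + eapply ord_le_trans; eauto.
    + exact IHole.
    + eapply ord_le_cocone; eauto.
    + exact H0.
  - revert y. induction x as [|x IHx|f IHf]; intros y H.
    + constructor.
    + rewrite ord_le_OS in H. induction y as [|y IHy|g IHg].
      * destruct (ord_lt_OZ _ H).
      * apply ole_succ, IHx, H.
      * destruct H as [k Hk]. apply ole_cocone with k. apply IHg, Hk.
    + apply ole_limiting. intro k. apply IHf, H.
Qed.

Lemma ord_lt_wf : well_founded ord_lt.
Proof.
  assert (H : forall x y, ord_lt y x -> Acc ord_lt y).
  { induction x as [|x IH|g IH]; intros y H.
    - destruct (ord_lt_OZ _ H).
    - constructor. intros z Hz. apply IH. eapply ord_lt_le_trans; eauto.
    - destruct H as [k Hk]. eapply IH; eauto. }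
  intro x. constructor. apply H.
Qed.

Lemma ord_lt_irrefl x : ~ ord_lt x x.
Proof. induction (ord_lt_wf x) as [x _ IH]. intro H. exact (IH x H H). Qed.

Lemma ord_le_lt_total x y : ord_le x y \/ ord_lt y x.
Proof.
  revert y. induction x as [|x IHx|f IHf]; intro y.
  - left. exact I.
  - rewrite ord_le_OS. unfold ord_lt at 2. rewrite ord_le_OS, ord_lt_OS.
    induction y as [|y IHy|g IHg].
    + right. exact I.
    + rewrite ord_lt_OS, ord_le_OS. destruct (IHx y); auto.
    + rewrite ord_lt_OL, ord_le_OL.
      destruct (classic (exists k, ord_lt x (g k))) as [H|H]; [left; exact H|right].
      intro k. destruct (IHg k) as [H1|H1]; auto. exfalso; apply H; eauto.
  - rewrite ord_le_OL.
    destruct (classic (forall k, ord_le (f k) y)) as [H|H]; [left; exact H|right].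
    apply not_all_ex_not in H. destruct H as [k Hk].
    destruct (IHf k y) as [H1|H1]; [contradiction|].
    eapply ord_lt_le_trans; [exact H1|]. apply (ord_le_cocone _ f k), ord_le_refl.
Qed.

Lemma ord_not_le_lt x y : ~ ord_le x y -> ord_lt y x.
Proof. intro H. destruct (ord_le_lt_total x y); tauto. Qed.

Lemma ord_lt_not_le x y : ord_lt x y -> ~ ord_le y x.
Proof. intros H1 H2. apply (ord_lt_irrefl x). eapply ord_lt_le_trans; eauto. Qed.

Lemma oeq_iff x y : oeq x y <-> ord_eq x y.
Proof. unfold oeq, ord_eq. rewrite !ole_iff. tauto. Qed.

Lemma olt_iff x y : olt x y <-> ord_lt x y.
Proof.
  unfold olt. rewrite !ole_iff. split.
  - intros [_ H]. apply ord_not_le_lt, H.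
  - intro H. split; [apply ord_ltW, H|apply ord_lt_not_le, H].
Qed.

Lemma ord_eq_refl x : ord_eq x x. Proof. split; apply ord_le_refl. Qed.
Lemma ord_eq_sym x y : ord_eq x y -> ord_eq y x. Proof. unfold ord_eq; tauto. Qed.
Lemma ord_eq_trans x y z : ord_eq x y -> ord_eq y z -> ord_eq x z.
Proof. intros [] []; split; eapply ord_le_trans; eauto. Qed.

Lemma ord_neq_lt x y : ~ ord_eq x y -> ord_lt x y \/ ord_lt y x.
Proof.
  intro Hne. destruct (ord_le_lt_total x y) as [H|H]; auto.
  left. apply ord_not_le_lt. intro H'. apply Hne. split; auto.
Qed.

Lemma OL_le f g : (forall k, exists k', ord_le (f k) (g k')) -> ord_le (OL f) (OL g).
Proof. intros H k. destruct (H k) as [k' Hk]. eapply ord_le_cocone; eauto. Qed.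

Lemma OL_eq f g : (forall k, ord_eq (f k) (g k)) -> ord_eq (OL f) (OL g).
Proof. intro H. split; apply OL_le; intro k; exists k; apply H. Qed.

(** * Ranks of well-founded trees *)

Definition child_rank (T : pt) (h : list nat -> Ord) (s : list nat) (m : nat) : Ord :=
  if T (s ++ [m]) then OS (h (s ++ [m])) else OZ.

Lemma is_rank_eq T h s : is_rank T h -> T s = true -> ord_eq (h s) (OL (child_rank T h s)).
Proof. intros H Hs. apply oeq_iff, H, Hs. Qed.

Lemma is_rank_lt T h s m : is_rank T h -> T s = true -> T (s ++ [m]) = true ->
  ord_lt (h (s ++ [m])) (h s).
Proof.
  intros H Hs Hc. destruct (is_rank_eq T h s H Hs) as [_ H2].
  specialize (H2 m). unfold child_rank in H2. rewrite Hc in H2. exact H2.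
Qed.

Lemma is_rank_no_branch T h : Tr T -> is_rank T h ->
  ~ exists f : nat -> nat, forall n, T (map f (seq 0 n)) = true.
Proof.
  intros HT Hr [f Hf].
  set (p := fun n => map f (seq 0 n)).
  assert (Hp : forall n, p (S n) = p n ++ [f n]).
  { intro n. unfold p. rewrite seq_S, map_app. reflexivity. }
  assert (H : forall o, Acc ord_lt o -> forall n, h (p n) <> o).
  { intros o Ho. induction Ho as [o _ IH]. intros n Hn.
    apply (IH (h (p (S n)))) with (S n); auto.
    rewrite <- Hn, Hp. apply (is_rank_lt T); [exact Hr|apply Hf|]. rewrite <- Hp. apply Hf. }
  exact (H _ (ord_lt_wf _) 0 eq_refl).
Qed.

Lemma is_rank_Trw T h : Tr T -> is_rank T h -> Trw T.
Proof. split; [|eapply is_rank_no_branch]; eauto. Qed.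

Definition child_of (T : pt) (c s : list nat) : Prop := T c = true /\ exists m, c = s ++ [m].

(* Dependent choice: a node that is not accessible has a non-accessible child,
   which produces an infinite branch. *)
Lemma Trw_Acc_root T : Trw T -> Acc (child_of T) [].
Proof.
  intros [HT Hwf]. apply NNPP. intro Hn.
  assert (Hstep : forall s, ~ Acc (child_of T) s ->
            exists m, T (s ++ [m]) = true /\ ~ Acc (child_of T) (s ++ [m])).
  { intros s Hs. apply NNPP. intro H. apply Hs. constructor. intros c [Hc [m ->]].
    apply NNPP. intro H2. apply H. exists m. auto. }
  set (next := fun s => epsilon (inhabits 0)
         (fun m => T (s ++ [m]) = true /\ ~ Acc (child_of T) (s ++ [m]))).
  assert (Hnext : forall s, ~ Acc (child_of T) s ->
            T (s ++ [next s]) = true /\ ~ Acc (child_of T) (s ++ [next s])).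
  { intros s Hs. apply epsilon_spec, Hstep, Hs. }
  set (path := fix path n := match n with 0 => [] | S k => path k ++ [next (path k)] end).
  assert (Hpath : forall n, ~ Acc (child_of T) (path n) /\ (n = 0 \/ T (path n) = true)).
  { induction n as [|n [IH _]]; [auto|]. split; [|right]; apply Hnext, IH. }
  apply Hwf. exists (fun k => next (path k)). intro n.
  replace (map (fun k => next (path k)) (seq 0 n)) with (path n).
  2:{ induction n; [reflexivity|]. rewrite seq_S, map_app, <- IHn. reflexivity. }
  destruct n.
  - simpl. destruct (T []) eqn:E0; auto. exfalso. apply Hn. constructor.
    intros c [Hc [m ->]]. apply (HT [] [m]) in Hc. congruence.
  - destruct (Hpath (S n)) as [_ [H|H]]; [discriminate|exact H].
Qed.

Lemma Trw_Acc T s : Trw T -> T s = true -> Acc (child_of T) s.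
Proof.
  intros Hw Hs. induction s as [|m s IH] using rev_ind; [apply Trw_Acc_root, Hw|].
  apply Acc_inv with s; [apply IH, (proj1 Hw s [m] Hs)|]. split; eauto.
Qed.

Lemma is_rank_unique T h1 h2 : Trw T -> is_rank T h1 -> is_rank T h2 ->
  forall s, T s = true -> ord_eq (h1 s) (h2 s).
Proof.
  intros Hw H1 H2 s Hs. induction (Trw_Acc T s Hw Hs) as [s _ IH].
  eapply ord_eq_trans; [apply is_rank_eq; eauto|].
  eapply ord_eq_trans; [|apply ord_eq_sym, is_rank_eq; eauto].
  apply OL_eq. intro k. unfold child_rank. destruct (T (s ++ [k])) eqn:E.
  - destruct (IH (s ++ [k])) as [Hl Hr]; [split; eauto|exact E|]. split; auto.
  - apply ord_eq_refl.
Qed.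

Inductive rank_graph (T : pt) : list nat -> Ord -> Prop :=
| rank_graph_intro s (F : nat -> Ord) :
    (forall m, T (s ++ [m]) = true -> rank_graph T (s ++ [m]) (F m)) ->
    rank_graph T s (OL (fun m => if T (s ++ [m]) then OS (F m) else OZ)).

Lemma rank_graph_unique T s o1 o2 : rank_graph T s o1 -> rank_graph T s o2 -> ord_eq o1 o2.
Proof.
  intro H. revert o2. induction H as [s F HF IH]. intros o2 H2. inversion H2; subst.
  apply OL_eq. intro k. destruct (T (s ++ [k])) eqn:E.
  - destruct (IH k E (F0 k) (H k E)). split; auto.
  - apply ord_eq_refl.
Qed.

Lemma rank_graph_total T s : Trw T -> T s = true -> exists o, rank_graph T s o.
Proof.
  intros Hw Hs. induction (Trw_Acc T s Hw Hs) as [s _ IH].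
  set (F := fun m => epsilon (inhabits OZ) (rank_graph T (s ++ [m]))).
  exists (OL (fun m => if T (s ++ [m]) then OS (F m) else OZ)). constructor.
  intros m Hm. unfold F. apply epsilon_spec, IH; [split|]; eauto.
Qed.

Definition rank (T : pt) (s : list nat) : Ord := epsilon (inhabits OZ) (rank_graph T s).

Lemma rank_graph_rank T s : Trw T -> T s = true -> rank_graph T s (rank T s).
Proof. intros. unfold rank. apply epsilon_spec, rank_graph_total; auto. Qed.

Lemma rank_is_rank T : Trw T -> is_rank T (rank T).
Proof.
  intros Hw s Hs. apply oeq_iff. pose proof (rank_graph_rank T s Hw Hs) as H.
  inversion H as [s0 F HF E1 E2].
  apply OL_eq. intro k. unfold child_rank. destruct (T (s ++ [k])) eqn:E.
  - destruct (rank_graph_unique T _ _ _ (HF k E) (rank_graph_rank T _ Hw E)). split; auto.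
  - apply ord_eq_refl.
Qed.

Lemma rank_eq T s : Trw T -> T s = true -> ord_eq (rank T s) (OL (child_rank T (rank T) s)).
Proof. intros Hw. apply is_rank_eq, rank_is_rank, Hw. Qed.

Lemma rank_lt T s m : Trw T -> T s = true -> T (s ++ [m]) = true ->
  ord_lt (rank T (s ++ [m])) (rank T s).
Proof. intros Hw. apply is_rank_lt, rank_is_rank, Hw. Qed.

Lemma rank_is_iff T s o : Trw T -> T s = true -> (rank_is T s o <-> ord_eq (rank T s) o).
Proof.
  intros Hw Hs. split.
  - intros [h [Hh Ho]]. apply oeq_iff in Ho. eapply ord_eq_trans; [|exact Ho].
    apply is_rank_unique with T; auto. apply rank_is_rank; auto.
  - intro H. exists (rank T). split; [apply rank_is_rank; auto|apply oeq_iff; auto].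
Qed.

Lemma same_rank_iff T T' s : Trw T -> Trw T' -> T s = true -> T' s = true ->
  (same_rank T T' s <-> ord_eq (rank T s) (rank T' s)).
Proof.
  intros Hw Hw' Hs Hs'. unfold same_rank. split.
  - intros [o [H1 H2]]. rewrite rank_is_iff in H1, H2 by auto.
    eapply ord_eq_trans; eauto using ord_eq_sym.
  - intro H. exists (rank T s). rewrite !rank_is_iff by auto.
    split; auto using ord_eq_refl, ord_eq_sym.
Qed.

Lemma rank_le_root T s : Trw T -> T s = true -> ord_le (rank T s) (rank T []).
Proof.
  intros Hw. induction s as [|m s IH] using rev_ind; intro Hs; [apply ord_le_refl|].
  pose proof (proj1 Hw s [m] Hs) as Hs'.
  eapply ord_le_trans; [apply ord_ltW, rank_lt|apply IH]; auto.
Qed.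

Lemma A_iff alpha T : A alpha T <-> Trw T /\ T [] = true /\ ord_eq (rank T []) alpha.
Proof.
  split; intros [H1 [H2 H3]]; (split; [exact H1|split; [exact H2|]]);
    apply (rank_is_iff T [] alpha H1 H2), H3.
Qed.

Lemma A_Trw alpha T : A alpha T -> Trw T. Proof. intros [H _]; exact H. Qed.

Lemma A_ord_eq alpha beta T : ord_eq alpha beta -> A alpha T -> A beta T.
Proof.
  rewrite !A_iff. intros E [H1 [H2 H3]]. split; [exact H1|split; [exact H2|]].
  eapply ord_eq_trans; eauto.
Qed.

Lemma rank_le_A alpha T s : A alpha T -> T s = true -> ord_le (rank T s) alpha.
Proof.
  intros HA Hs. apply A_iff in HA as [Hw [_ Ha]].
  eapply ord_le_trans; [apply rank_le_root; auto|apply Ha].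
Qed.

Lemma A_of_is_rank T h alpha : Tr T -> is_rank T h -> T [] = true -> ord_eq (h []) alpha ->
  A alpha T /\ forall s, T s = true -> ord_eq (rank T s) (h s).
Proof.
  intros HT Hr H0 Ha. assert (Hw : Trw T) by (eapply is_rank_Trw; eauto).
  split.
  - split; [exact Hw|split; [exact H0|]]. exists h. split; auto. apply oeq_iff; auto.
  - intros s Hs. apply is_rank_unique with T; auto. apply rank_is_rank; auto.
Qed.

(** * The topology [tau_alpha] *)

Lemma small_mono n n' s : n <= n' -> small n s -> small n' s.
Proof.
  intros Hn [H1 H2]. split; [lia|]. eapply Forall_impl; [|exact H2]. simpl; intros; lia.
Qed.

Definition small_bound (s : list nat) : nat := length s + list_sum s + 1.

Lemma small_small_bound s : small (small_bound s) s.
Proof.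
  unfold small_bound. split; [lia|].
  assert (H : Forall (fun k => k <= list_sum s) s).
  { induction s as [|a s IH]; constructor; [simpl; lia|].
    eapply Forall_impl; [|exact IH]. simpl; intros; lia. }
  eapply Forall_impl; [|exact H]. simpl; intros; lia.
Qed.

Lemma small_of_bound n s : small_bound s <= n -> small n s.
Proof. intro H. eapply small_mono; [exact H|apply small_small_bound]. Qed.

Lemma small_cons n k r : small n (k :: r) -> k < n.
Proof. intros [_ H]. inversion H; auto. Qed.

Lemma U_iff alpha n T T' : A alpha T ->
  (U alpha n T T' <-> A alpha T' /\ (forall s, small n s -> T' s = T s) /\
     (forall s, small n s -> T s = true -> ord_eq (rank T' s) (rank T s))).
Proof.
  intro HA. unfold U.
  split; intros [H1 [H2 H3]]; (split; [exact H1|split; [exact H2|]]); intros s Hs Ht;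
    apply (same_rank_iff T' T s (A_Trw _ _ H1) (A_Trw _ _ HA)); auto; rewrite H2; auto.
Qed.

Lemma U_A alpha n T T' : U alpha n T T' -> A alpha T'. Proof. intros [H _]; exact H. Qed.

Lemma U_refl alpha n T : A alpha T -> U alpha n T T.
Proof. intro HA. apply U_iff; auto. split; [exact HA|split]; [auto|intros; apply ord_eq_refl]. Qed.

Lemma U_mono alpha n n' T : A alpha T -> n <= n' -> subset (U alpha n' T) (U alpha n T).
Proof.
  intros HA Hn T' H. apply U_iff in H; auto. apply U_iff; auto.
  destruct H as [H1 [H2 H3]]. split; [exact H1|split]; intros s Hs; [apply H2|apply H3];
  eapply small_mono; eauto.
Qed.

Lemma U_trans alpha n T T' : A alpha T -> U alpha n T T' -> subset (U alpha n T') (U alpha n T).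
Proof.
  intros HA H T'' H'. pose proof (U_A _ _ _ _ H) as HA'.
  apply U_iff in H; auto. apply U_iff in H'; auto. apply U_iff; auto.
  destruct H as [H1 [H2 H3]], H' as [H1' [H2' H3']].
  split; [exact H1'|split].
  - intros s Hs. rewrite H2', H2; auto.
  - intros s Hs Ht. eapply ord_eq_trans; [apply H3'; auto; rewrite H2; auto|apply H3; auto].
Qed.

Lemma U_ord_eq a b n T T' : ord_eq a b -> U a n T T' -> U b n T T'.
Proof. intros E [H1 H2]. split; [eapply A_ord_eq; eauto|exact H2]. Qed.

Lemma tau_open_U alpha n T : A alpha T -> tau_open alpha (U alpha n T).
Proof.
  intro HA. split; [intros T' H; eapply U_A; eauto|].
  intros T' H. exists n. apply U_trans; auto.
Qed.

Lemma tau_open_A alpha : tau_open alpha (A alpha).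
Proof. split; [intros T H; auto|]. intros T H. exists 0. intros T' H'. eapply U_A; eauto. Qed.

Lemma tau_open_inter alpha O1 O2 : tau_open alpha O1 -> tau_open alpha O2 ->
  tau_open alpha (inter O1 O2).
Proof.
  intros [S1 H1] [S2 H2]. split; [intros T [HT _]; auto|].
  intros T [HT1 HT2]. destruct (H1 T HT1) as [n1 Hn1], (H2 T HT2) as [n2 Hn2].
  exists (max n1 n2). intros T' H'.
  split; [apply Hn1|apply Hn2]; eapply U_mono; [apply S1; auto| |exact H'| apply S1; auto| |exact H']; lia.
Qed.

Lemma tau_open_ord_eq a b O : ord_eq a b -> tau_open a O -> tau_open b O.
Proof.
  intros E [H1 H2]. split; [intros T HT; eapply A_ord_eq; eauto|].
  intros T HT. destruct (H2 T HT) as [n Hn]. exists n. intros T' H'. apply Hn.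
  eapply U_ord_eq; [apply ord_eq_sym|]; eauto.
Qed.

Lemma nowhere_dense_empty alpha : nowhere_dense alpha (fun _ => False).
Proof.
  intros O HO Hne. exists O. split; [exact HO|split; [exact Hne|split]]; [intros T H; exact H|].
  intros T _ [].
Qed.

Lemma nowhere_dense_ord_eq a b N : ord_eq a b -> nowhere_dense a N -> nowhere_dense b N.
Proof.
  intros E H O HO Hne.
  destruct (H O (tau_open_ord_eq b a O (ord_eq_sym _ _ E) HO) Hne) as [O' [H1 H2]].
  exists O'. split; [eapply tau_open_ord_eq; eauto|exact H2].
Qed.

Lemma meager_subset alpha M M' : subset M M' -> meager alpha M' -> meager alpha M.
Proof. intros Hs [N [H1 H2]]. exists N. split; auto. Qed.

Lemma meager_empty alpha : meager alpha (fun _ => False).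
Proof. exists (fun _ _ => False). split; [intro; apply nowhere_dense_empty|intros T []]. Qed.

Lemma meager_union alpha (M : nat -> pset) : (forall i, meager alpha (M i)) ->
  meager alpha (fun T => exists i, M i T).
Proof.
  intro H. apply choice in H as [N HN].
  exists (fun k => let (i, j) := of_nat k in N i j). split.
  - intro k. destruct (of_nat k) as [i j]. apply HN.
  - intros T [i Hi]. destruct (proj2 (HN i) T Hi) as [j Hj]. exists (to_nat (i, j)).
    rewrite cancel_of_to. exact Hj.
Qed.

Lemma meager_union2 alpha M1 M2 : meager alpha M1 -> meager alpha M2 ->
  meager alpha (fun T => M1 T \/ M2 T).
Proof.
  intros H1 H2.
  eapply meager_subset; [|apply (meager_union alpha (fun i => match i with 0 => M1 | _ => M2 end))].
  - intros T [H|H]; [exists 0|exists 1]; exact H.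
  - intros [|i]; auto.
Qed.

Lemma meager_ord_eq a b M : ord_eq a b -> meager a M -> meager b M.
Proof. intros E [N [H1 H2]]. exists N. split; auto. intro k. eapply nowhere_dense_ord_eq; eauto. Qed.

(** * The Baire category theorem for [tau_alpha] *)

Fixpoint words (n l : nat) : list (list nat) :=
  match l with
  | 0 => [[]]
  | S l => flat_map (fun w => map (fun a => a :: w) (seq 0 n)) (words n l)
  end.

Definition window n := flat_map (words n) (seq 0 (S n)).

Lemma In_words n l s : In s (words n l) <-> length s = l /\ Forall (fun k => k < n) s.
Proof.
  revert s. induction l as [|l IH]; intro s; simpl.
  - split; [intros [<-|[]]; auto|intros [H _]; destruct s; [auto|discriminate]].
  - rewrite in_flat_map. split.
    + intros [w [Hw Hs]]. apply in_map_iff in Hs as [a [<- Ha]].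
      apply in_seq in Ha. apply IH in Hw as [Hl Hf]. simpl. split; [lia|constructor; auto; lia].
    + intros [Hl Hf]. destruct s as [|a w]; [discriminate|]. inversion Hf; subst.
      exists w. split; [apply IH; auto|]. apply in_map_iff. exists a. split; auto.
      apply in_seq. lia.
Qed.

Lemma In_window n s : In s (window n) <-> small n s.
Proof.
  unfold window, small. rewrite in_flat_map. split.
  - intros [l [Hl Hs]]. apply in_seq in Hl. apply In_words in Hs as [H1 H2]. split; auto; lia.
  - intros [H1 H2]. exists (length s). split; [apply in_seq; lia|apply In_words; auto].
Qed.

Lemma list_uniform_bound {X : Type} (L : list X) (Q : X -> nat -> Prop) :
  (forall x n n', n <= n' -> Q x n -> Q x n') ->
  (forall x, In x L -> exists n, Q x n) -> exists n, forall x, In x L -> Q x n.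
Proof.
  intros Hm. induction L as [|a L IH]; intro H; [exists 0; intros x []|].
  destruct (H a (or_introl eq_refl)) as [n1 H1]. destruct IH as [n2 H2].
  { intros x Hx. apply H. right; auto. }
  exists (max n1 n2). intros x [<-|Hx]; eapply Hm; [|exact H1| |apply H2; auto]; lia.
Qed.

(* A stage of the fusion construction: a tree, the width [n] of the window
   [n^{<= n}] that is already fixed, and for each node a fixed presentation
   [ref s] of its rank as a supremum. Fixing [ref s] once and for all is what
   lets the ranks pass to the limit. *)
Record stage := { st_tree : pt; st_width : nat; st_ref : list nat -> nat -> Ord }.

Definition zero_or_succ (x : Ord) := x = OZ \/ exists y, x = OS y.

Definition stage_ok alpha (st : stage) :=
  A alpha (st_tree st) /\ (forall s m, zero_or_succ (st_ref st s m)) /\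
  forall s, small (st_width st) s -> st_tree st s = true ->
    ord_eq (rank (st_tree st) s) (OL (st_ref st s)).

Definition refines alpha (k : nat) (st st' : stage) : Prop :=
  st_width st < st_width st' /\
  subset (U alpha (st_width st') (st_tree st')) (U alpha (st_width st) (st_tree st)) /\
  (forall s, small (st_width st) s -> st_ref st' s = st_ref st s) /\
  stage_ok alpha st' /\
  (forall s m, small (st_width st) s -> st_tree st s = true -> m <= k ->
     exists m', small (st_width st') (s ++ [m']) /\
       ord_le (st_ref st s m) (child_rank (st_tree st') (rank (st_tree st')) s m')).

Lemma child_rank_zero_or_succ T h s m : zero_or_succ (child_rank T h s m).
Proof. unfold child_rank, zero_or_succ. destruct (T (s ++ [m])); eauto. Qed.

Lemma ref_witness alpha st T1 s m : stage_ok alpha st ->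
  U alpha (st_width st) (st_tree st) T1 -> small (st_width st) s -> st_tree st s = true ->
  exists m', ord_le (st_ref st s m) (child_rank T1 (rank T1) s m').
Proof.
  intros [HA [Hzs HI]] HU Hs Ht.
  pose proof (proj1 (U_iff _ _ _ _ HA) HU) as [HA1 [Hag Hrk]].
  assert (Hle : ord_le (st_ref st s m) (OL (child_rank T1 (rank T1) s))).
  { eapply ord_le_trans; [apply (ord_le_cocone _ (st_ref st s) m), ord_le_refl|].
    eapply ord_le_trans; [apply (HI s Hs Ht)|].
    eapply ord_le_trans; [apply (Hrk s Hs Ht)|].
    apply rank_eq; [apply (A_Trw alpha), HA1|rewrite Hag; auto]. }
  destruct (Hzs s m) as [E|[y E]]; rewrite E in *; [exists 0; exact I|].
  destruct Hle as [i Hi]. exists i. exact Hi.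
Qed.

Lemma refines_exists alpha (N : pset) k st : nowhere_dense alpha N -> stage_ok alpha st ->
  exists st', refines alpha k st st' /\
    forall T, U alpha (st_width st') (st_tree st') T -> ~ N T.
Proof.
  destruct st as [T n ref]. intros Hnd Hok. pose proof Hok as [HA [Hzs HI]]. simpl in *.
  destruct (Hnd (U alpha n T) (tau_open_U _ _ _ HA)) as [O' [[_ HO'n] [[T1 HT1] [Hsub Hdis]]]].
  { exists T. apply U_refl; auto. }
  destruct (HO'n T1 HT1) as [m1 Hm1].
  assert (HU1 : U alpha n T T1) by auto.
  pose proof (proj1 (U_iff _ _ _ _ HA) HU1) as [HA1 [Hag Hrk]].
  set (Q := fun (x : list nat * nat) n' => T (fst x) = true ->
        exists m', small n' (fst x ++ [m']) /\
          ord_le (ref (fst x) (snd x)) (child_rank T1 (rank T1) (fst x) m')).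
  destruct (list_uniform_bound (list_prod (window n) (seq 0 (S k))) Q) as [nb Hnb].
  { intros [s m] a b Hab HQ Hs. destruct (HQ Hs) as [m' [H1 H2]].
    exists m'. split; [eapply small_mono|]; eauto. }
  { intros [s m] Hin. apply in_prod_iff in Hin as [Hs _]. apply In_window in Hs. unfold Q; simpl.
    destruct (T s) eqn:ETs; [|exists 0; intro; discriminate].
    destruct (ref_witness alpha (Build_stage T n ref) T1 s m Hok HU1 Hs ETs) as [i Hi].
    exists (small_bound (s ++ [i])). intros _. exists i. split; [apply small_small_bound|exact Hi]. }
  set (n' := max nb (max m1 (S n))).
  set (ref' := fun s => if excluded_middle_informative (small n s) then ref s
                        else child_rank T1 (rank T1) s).
  assert (HUn' : subset (U alpha n' T1) O').
  { intros T'' H. apply Hm1. eapply U_mono; [exact HA1| |exact H]. lia. }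
  exists (Build_stage T1 n' ref'). unfold refines; simpl. split; [split; [lia|split]|].
  - intros T'' H. apply Hsub, HUn', H.
  - split; [intros s Hs; unfold ref'; destruct (excluded_middle_informative (small n s)); tauto|].
    split; [split; [exact HA1|split]|]; cbn [st_ref st_tree st_width].
    + intros s m. unfold ref'. destruct (excluded_middle_informative (small n s)); auto.
      apply child_rank_zero_or_succ.
    + intros s Hs Ht. unfold ref'. destruct (excluded_middle_informative (small n s)) as [Hsn|Hsn].
      * rewrite Hag in Ht by auto. eapply ord_eq_trans; [apply Hrk|apply HI]; auto.
      * apply rank_eq; auto. apply (A_Trw alpha), HA1.
    + intros s m Hs Ht Hm.
      destruct (Hnb (s, m)) as [m' [H1 H2]]; [apply in_prod_iff; split; [apply In_window; auto|apply in_seq; lia]|exact Ht|].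
      exists m'. split; [eapply small_mono; [|exact H1]; lia|exact H2].
  - intros T'' H. apply Hdis, HUn', H.
Qed.

Section Fusion.

Variables (alpha : Ord) (st : nat -> stage).
Hypothesis st_ok0 : stage_ok alpha (st 0).
Hypothesis st_refines : forall k, refines alpha k (st k) (st (S k)).

Let Tk k := st_tree (st k).
Let nk k := st_width (st k).

Lemma stage_ok_all k : stage_ok alpha (st k).
Proof. destruct k; [exact st_ok0|apply st_refines]. Qed.

Lemma A_stage k : A alpha (Tk k).
Proof. apply stage_ok_all. Qed.

Lemma width_mono j k : j <= k -> nk j <= nk k.
Proof. induction 1 as [|k Hjk IH]; [lia|]. pose proof (proj1 (st_refines k)). unfold nk in *. lia. Qed.

Lemma width_ge k : k <= nk k.
Proof. induction k; [lia|]. pose proof (proj1 (st_refines k)). unfold nk in *. lia. Qed.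

Lemma U_stage_decr j k : j <= k -> subset (U alpha (nk k) (Tk k)) (U alpha (nk j) (Tk j)).
Proof.
  induction 1 as [|k Hjk IH]; [intros T H; exact H|].
  intros T H. apply IH, (proj1 (proj2 (st_refines k))), H.
Qed.

Lemma ref_stable j k s : j <= k -> small (nk j) s -> st_ref (st k) s = st_ref (st j) s.
Proof.
  induction 1 as [|k Hjk IH]; intros Hs; [reflexivity|]. rewrite <- IH by exact Hs.
  apply (st_refines k). eapply small_mono; [|exact Hs]. apply width_mono; auto.
Qed.

Lemma stages_agree j k s : small (nk j) s -> small (nk k) s ->
  Tk k s = Tk j s /\ (Tk j s = true -> ord_eq (rank (Tk k) s) (rank (Tk j) s)).
Proof.
  assert (Hle : forall j k, j <= k -> small (nk j) s ->
            Tk k s = Tk j s /\ (Tk j s = true -> ord_eq (rank (Tk k) s) (rank (Tk j) s))).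
  { intros j' k' Hjk Hs.
    pose proof (U_stage_decr j' k' Hjk _ (U_refl _ _ _ (A_stage k'))) as HU.
    apply (U_iff _ _ _ _ (A_stage j')) in HU as [_ [H1 H2]]. auto. }
  intros Hj Hk. destruct (Nat.le_ge_cases j k) as [H|H]; [apply Hle; auto|].
  destruct (Hle k j H Hk) as [E1 E2]. split; auto.
  intro Ht. apply ord_eq_sym, E2. congruence.
Qed.

Definition limit_tree : pt := fun s => Tk (small_bound s) s.
Definition limit_rank (s : list nat) : Ord := rank (Tk (small_bound s)) s.

Lemma small_limit_stage s : small (nk (small_bound s)) s.
Proof. apply small_of_bound, width_ge. Qed.

Lemma common_window s t : exists k, small (nk k) s /\ small (nk k) t.
Proof.
  exists (max (small_bound s) (small_bound t)).
  split; apply small_of_bound; (eapply Nat.le_trans; [|apply width_ge]); lia.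
Qed.

Lemma limit_tree_agree j s : small (nk j) s -> limit_tree s = Tk j s.
Proof. intro Hs. apply (stages_agree j (small_bound s) s Hs (small_limit_stage s)). Qed.

Lemma limit_rank_agree j s : small (nk j) s -> limit_tree s = true ->
  ord_eq (limit_rank s) (rank (Tk j) s).
Proof.
  intros Hs Ht. apply (stages_agree j (small_bound s) s Hs (small_limit_stage s)).
  rewrite <- limit_tree_agree; auto.
Qed.

Lemma limit_tree_Tr : Tr limit_tree.
Proof.
  intros s t H. destruct (common_window (s ++ t) s) as [k [H1 H2]].
  rewrite (limit_tree_agree k) in *; auto. exact (proj1 (A_Trw _ _ (A_stage k)) s t H).
Qed.

(* The witnesses promised by [refines] for the first [k] entries of [ref s]
   survive in the limit, so every entry of the fixed presentation of the rank
   of [s] is bounded by a child of [s] in the limit tree. *)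
Lemma limit_rank_le_children s : limit_tree s = true ->
  ord_le (limit_rank s) (OL (child_rank limit_tree limit_rank s)).
Proof.
  intro Hs. set (j := small_bound s). pose proof (small_limit_stage s) as Hsj.
  assert (Htj : Tk j s = true) by (rewrite <- limit_tree_agree; auto).
  destruct (stage_ok_all j) as [_ [_ HI]].
  eapply ord_le_trans; [apply (proj1 (limit_rank_agree j s Hsj Hs))|].
  eapply ord_le_trans; [apply (proj1 (HI s Hsj Htj))|].
  intro m. set (k := max j m).
  assert (Hsk : small (nk k) s) by (apply (small_mono (nk j)); [apply width_mono; lia|exact Hsj]).
  assert (Htk : Tk k s = true) by (rewrite <- (limit_tree_agree k); auto).
  rewrite <- (ref_stable j k s ltac:(lia) Hsj).
  destruct (proj2 (proj2 (proj2 (proj2 (st_refines k)))) s m Hsk Htk ltac:(lia))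
    as [m' [Hsm' Hle]].
  apply ord_le_cocone with m'. eapply ord_le_trans; [exact Hle|].
  fold (Tk (S k)). unfold child_rank. rewrite <- (limit_tree_agree (S k) _ Hsm').
  destruct (limit_tree (s ++ [m'])) eqn:E; [|exact I].
  apply (limit_rank_agree (S k) _ Hsm' E).
Qed.

Lemma children_le_limit_rank s : limit_tree s = true ->
  ord_le (OL (child_rank limit_tree limit_rank s)) (limit_rank s).
Proof.
  intros Hs m. unfold child_rank. destruct (limit_tree (s ++ [m])) eqn:E; [|exact I].
  destruct (common_window (s ++ [m]) s) as [k [H1 H2]].
  apply ord_le_trans with (OS (rank (Tk k) (s ++ [m]))).
  { apply (limit_rank_agree k _ H1 E). }
  eapply ord_le_trans; [apply rank_lt; [apply (A_Trw alpha), A_stage|..]|].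
  - rewrite <- limit_tree_agree; auto.
  - rewrite <- limit_tree_agree; auto.
  - apply (limit_rank_agree k s H2 Hs).
Qed.

Lemma limit_rank_is_rank : is_rank limit_tree limit_rank.
Proof.
  intros s Hs. apply oeq_iff.
  split; [apply limit_rank_le_children|apply children_le_limit_rank]; exact Hs.
Qed.

Lemma limit_tree_U j : U alpha (nk j) (Tk j) limit_tree.
Proof.
  assert (Hroot : small (nk 0) []) by (split; simpl; [lia|constructor]).
  assert (H0 : limit_tree [] = true) by (rewrite (limit_tree_agree 0); auto; apply A_stage).
  destruct (A_of_is_rank limit_tree limit_rank alpha limit_tree_Tr limit_rank_is_rank H0)
    as [HA Hrank].
  { eapply ord_eq_trans; [apply (limit_rank_agree 0); auto|apply A_iff, A_stage]. }
  apply U_iff; [apply A_stage|]. split; [exact HA|split].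
  - intros s Hs. apply limit_tree_agree; auto.
  - intros s Hs Ht. assert (Hf : limit_tree s = true) by (rewrite (limit_tree_agree j s Hs); auto).
    eapply ord_eq_trans; [apply Hrank, Hf|apply (limit_rank_agree j s Hs Hf)].
Qed.

End Fusion.

Definition next_stage alpha (N : pset) k (st : stage) : stage :=
  epsilon (inhabits st) (fun st' => refines alpha k st st' /\
    forall T, U alpha (st_width st') (st_tree st') T -> ~ N T).

Fixpoint fusion_sequence alpha (N : nat -> pset) (st0 : stage) (k : nat) : stage :=
  match k with
  | 0 => st0
  | S k => next_stage alpha (N k) k (fusion_sequence alpha N st0 k)
  end.

Theorem baire alpha O (N : nat -> pset) : tau_open alpha O -> (exists T, O T) ->
  (forall k, nowhere_dense alpha (N k)) -> exists T, O T /\ forall k, ~ N k T.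
Proof.
  intros [HOA HOn] [T0 HT0] Hnd. destruct (HOn T0 HT0) as [n0 Hn0].
  pose proof (HOA T0 HT0) as HA0.
  set (st0 := Build_stage T0 n0 (child_rank T0 (rank T0))).
  assert (Hok0 : stage_ok alpha st0).
  { split; [exact HA0|split; [intros; apply child_rank_zero_or_succ|]].
    intros s _ Hs. apply rank_eq, Hs. apply (A_Trw alpha), HA0. }
  set (sq := fusion_sequence alpha N st0).
  assert (Hnext : forall k, stage_ok alpha (sq k) -> refines alpha k (sq k) (sq (S k)) /\
            forall T, U alpha (st_width (sq (S k))) (st_tree (sq (S k))) T -> ~ N k T).
  { intros k Hok. unfold sq. simpl. unfold next_stage.
    apply epsilon_spec, refines_exists; auto. }
  assert (Hok : forall k, stage_ok alpha (sq k)).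
  { induction k as [|k IH]; [exact Hok0|apply (Hnext k IH)]. }
  pose proof (fun k => proj1 (Hnext k (Hok k))) as Hrefines.
  exists (limit_tree sq). split.
  - apply Hn0, (limit_tree_U alpha sq Hok0 Hrefines 0).
  - intro k. apply (proj2 (Hnext k (Hok k))), (limit_tree_U alpha sq Hok0 Hrefines (S k)).
Qed.

Corollary open_not_meager alpha O : tau_open alpha O -> (exists T, O T) -> ~ meager alpha O.
Proof.
  intros HO Hne [N [HN Hcov]]. destruct (baire alpha O N HO Hne HN) as [T [HT HnT]].
  destruct (Hcov T HT) as [k Hk]. exact (HnT k Hk).
Qed.

(** * The Baire property *)

Definition sym_diff_A alpha (B O : pset) : pset := fun T => A alpha T /\ ~ (B T <-> O T).

Definition has_baire_property alpha (B : pset) : Prop :=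
  exists O, tau_open alpha O /\ meager alpha (sym_diff_A alpha B O).

Definition list_small_bound (l : list (list nat)) : nat :=
  fold_right (fun s acc => max (small_bound s) acc) 0 l.

Lemma small_bound_le_list l s : In s l -> small_bound s <= list_small_bound l.
Proof. induction l as [|a l IH]; simpl; [tauto|]. intros [<-|H]; [|specialize (IH H)]; lia. Qed.

Lemma tau_open_of_open alpha (V : pset) : is_open V -> tau_open alpha (fun T => A alpha T /\ V T).
Proof.
  intro HV. split; [intros T [H _]; exact H|].
  intros T [HA HVT]. destruct (HV T HVT) as [l Hl]. exists (list_small_bound l).
  intros T' H'. split; [eapply U_A; eauto|]. apply Hl. intros s Hs.
  apply (proj1 (U_iff _ _ _ _ HA) H'), small_of_bound, small_bound_le_list, Hs.
Qed.

Lemma open_has_baire_property alpha V : is_open V -> has_baire_property alpha V.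
Proof.
  intro HV. exists (fun T => A alpha T /\ V T). split; [apply tau_open_of_open; auto|].
  eapply meager_subset; [|apply meager_empty]. intros T [HA Hd]. apply Hd. tauto.
Qed.

Definition exterior alpha (O : pset) : pset :=
  fun T => A alpha T /\ exists n, forall T', U alpha n T T' -> ~ O T'.

Lemma tau_open_exterior alpha O : tau_open alpha (exterior alpha O).
Proof.
  split; [intros T [H _]; exact H|].
  intros T [HA [n Hn]]. exists n. intros T' H'. split; [eapply U_A; eauto|].
  exists n. intros T'' H''. apply Hn. eapply U_trans; eauto.
Qed.

Lemma boundary_nowhere_dense alpha O : tau_open alpha O ->
  nowhere_dense alpha (fun T => A alpha T /\ ~ O T /\ ~ exterior alpha O T).
Proof.
  intros HO V HV [T0 HT0]. destruct (classic (exists T, V T /\ O T)) as [[T1 [H1 H2]]|Hno].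
  - exists (inter V O). split; [apply tau_open_inter; auto|].
    split; [exists T1; split; auto|]. split; [intros T [HT _]; exact HT|].
    intros T [_ HTO] [_ [HnO _]]. auto.
  - exists V. split; [auto|split; [exists T0; auto|split; [intros T HT; exact HT|]]].
    intros T HT [HA [_ HnE]]. apply HnE. split; auto. destruct (proj2 HV T HT) as [n Hn].
    exists n. intros T' H' HO'. apply Hno. exists T'. auto.
Qed.

Lemma has_baire_property_compl alpha B : has_baire_property alpha B ->
  has_baire_property alpha (fun T => ~ B T).
Proof.
  intros [O [HO HM]]. exists (exterior alpha O). split; [apply tau_open_exterior|].
  assert (HD : meager alpha (fun T => A alpha T /\ ~ O T /\ ~ exterior alpha O T)).
  { exists (fun _ => fun T => A alpha T /\ ~ O T /\ ~ exterior alpha O T).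
    split; [intros _; apply boundary_nowhere_dense; auto|intros T HT; exists 0; exact HT]. }
  eapply meager_subset; [|apply (meager_union2 alpha _ _ HM HD)].
  intros T [HA Hd]. destruct (classic (B T)) as [HBT|HBT]; destruct (classic (O T)) as [HOT|HOT].
  - exfalso. apply Hd. split; [tauto|]. intros [_ [n Hn]]. destruct (Hn T (U_refl _ _ _ HA) HOT).
  - left. split; auto. tauto.
  - left. split; auto. tauto.
  - right. split; [auto|split; [auto|]]. intros Hs. apply Hd. tauto.
Qed.

Lemma has_baire_property_union alpha (F : nat -> pset) :
  (forall n, has_baire_property alpha (F n)) ->
  has_baire_property alpha (fun T => exists n, F n T).
Proof.
  intro H. apply choice in H as [On HOn].
  exists (fun T => exists n, On n T). split.
  - split; [intros T [n Hn]; apply (proj1 (proj1 (HOn n))); auto|].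
    intros T [n Hn]. destruct (proj2 (proj1 (HOn n)) T Hn) as [m Hm].
    exists m. intros T' H'. exists n. auto.
  - eapply meager_subset; [|apply (meager_union alpha (fun n => sym_diff_A alpha (F n) (On n)))].
    2:{ intro n. apply HOn. }
    intros T [HA Hd]. destruct (classic (exists n, F n T)) as [[n Hn]|Hn].
    + exists n. split; auto. intros [H1 H2]. apply Hd. split; eauto.
    + destruct (classic (exists n, On n T)) as [[n Hn2]|Hn2]; [|exfalso; apply Hd; tauto].
      exists n. split; auto. intros [H1 H2]. apply Hn. eauto.
Qed.

Lemma borel_has_baire_property alpha B : borel B -> has_baire_property alpha B.
Proof.
  induction 1.
  - apply open_has_baire_property; auto.
  - apply has_baire_property_compl; auto.
  - apply has_baire_property_union; auto.
Qed.

Lemma borel_not_meager_local alpha B : borel B -> ~ meager alpha (fun T => B T /\ A alpha T) ->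
  exists T n, A alpha T /\ meager alpha (fun T' => U alpha n T T' /\ ~ B T').
Proof.
  intros HB Hnm. destruct (borel_has_baire_property alpha B HB) as [O [[HOA HOn] HM]].
  destruct (classic (exists T, O T)) as [[T HT]|Hno].
  - destruct (HOn T HT) as [n Hn]. exists T, n. split; auto.
    eapply meager_subset; [|exact HM]. intros T' [H1 H2]. split; [eapply U_A; eauto|].
    intros [_ H]. apply H2, H, Hn, H1.
  - exfalso. apply Hnm. eapply meager_subset; [|exact HM]. intros T [H1 H2]. split; auto.
    intros [H _]. apply Hno. exists T. auto.
Qed.

(** * Nonemptiness and perfectness of [A_alpha] *)

(* The immediate predecessors of [a] used as ranks of the children of the root
   of a canonical tree: the predecessor of a successor, the terms of a limit
   sequence without maximum, and for a sequence with a maximum those of the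
   maximum. *)
Definition no_max (f : nat -> Ord) := forall k, exists k', ord_lt (f k) (f k').
Definition argmax (f : nat -> Ord) :=
  epsilon (inhabits 0) (fun k0 => forall k', ~ ord_lt (f k0) (f k')).

Fixpoint ord_child (a : Ord) (k : nat) : option Ord :=
  match a with
  | OZ => None
  | OS b => if Nat.eqb k 0 then Some b else None
  | OL f => if excluded_middle_informative (no_max f) then Some (f k)
            else ord_child (f (argmax f)) k
  end.

Fixpoint canon_tree (a : Ord) (s : list nat) : bool :=
  match s with
  | [] => true
  | k :: s' => match ord_child a k with Some b => canon_tree b s' | None => false end
  end.

Fixpoint canon_rank (a : Ord) (s : list nat) : Ord :=
  match s with
  | [] => a
  | k :: s' => match ord_child a k with Some b => canon_rank b s' | None => OZ end
  end.

Definition ord_child_term a k := match ord_child a k with Some b => OS b | None => OZ end.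

Lemma ord_eq_children a : ord_eq a (OL (ord_child_term a)).
Proof.
  unfold ord_child_term. induction a as [|b IH|f IH]; simpl.
  - split; [exact I|intro; exact I].
  - split; [apply ord_le_cocone with 0; apply ord_le_refl|].
    intros [|k]; [apply ord_le_refl|exact I].
  - destruct (excluded_middle_informative (no_max f)) as [Hl|Hl].
    + split; intro k.
      * apply ord_le_cocone with k. apply ord_ltW, ord_lt_succ.
      * destruct (Hl k) as [k' Hk']. apply ord_le_cocone with k'. exact Hk'.
    + assert (Hk0 : forall k', ~ ord_lt (f (argmax f)) (f k')).
      { unfold argmax. apply epsilon_spec. apply NNPP. intro H. apply Hl. intro k.
        apply NNPP. intro H2. apply H. exists k. intros k' H3. apply H2. eauto. }
      eapply ord_eq_trans; [|apply IH]. split.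
      * intro k. destruct (ord_le_lt_total (f k) (f (argmax f))); auto.
        exfalso. eapply Hk0; eauto.
      * apply ord_le_cocone with (argmax f). apply ord_le_refl.
Qed.

Lemma canon_tree_Tr a : Tr (canon_tree a).
Proof.
  intros s t. revert a. induction s as [|k s IH]; intros a H; simpl; auto.
  simpl in H. destruct (ord_child a k); auto.
Qed.

Lemma canon_rank_is_rank a : is_rank (canon_tree a) (canon_rank a).
Proof.
  intros s. revert a. induction s as [|k s IH]; intros a Hs.
  - apply oeq_iff. eapply ord_eq_trans; [apply ord_eq_children|]. apply OL_eq. intro n.
    unfold ord_child_term, child_rank. simpl. destruct (ord_child a n); apply ord_eq_refl.
  - simpl in Hs |- *. destruct (ord_child a k) as [b|]; [apply (IH b Hs)|discriminate].
Qed.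

Lemma A_nonempty alpha : exists T, A alpha T.
Proof.
  exists (canon_tree alpha).
  apply (A_of_is_rank _ (canon_rank alpha)); [apply canon_tree_Tr|apply canon_rank_is_rank|reflexivity|].
  apply ord_eq_refl.
Qed.

Lemma A_not_meager alpha : ~ meager alpha (A alpha).
Proof. apply open_not_meager; [apply tau_open_A|apply A_nonempty]. Qed.

Definition add_root_leaf (T : pt) (N : nat) : pt :=
  fun s => if list_eq_dec Nat.eq_dec s [N] then true else T s.

Lemma add_root_leaf_Tr T N : Tr T -> T [] = true -> Tr (add_root_leaf T N).
Proof.
  intros HTr H0 s t H. unfold add_root_leaf in *.
  destruct (list_eq_dec Nat.eq_dec (s ++ t) [N]) as [E|E].
  - apply app_eq_unit in E as [[-> _]|[-> _]]; destruct (list_eq_dec Nat.eq_dec _ [N]); auto.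
  - destruct (list_eq_dec Nat.eq_dec s [N]); auto. eapply HTr; eauto.
Qed.

(* The new leaf contributes [1] to the supremum at the root, which is harmless
   since the root has positive rank. *)
Lemma add_root_leaf_is_rank T N : Trw T -> ord_lt OZ (rank T []) -> T [N] = false ->
  is_rank (add_root_leaf T N) (fun s => if list_eq_dec Nat.eq_dec s [N] then OZ else rank T s).
Proof.
  intros Hw Hpos HTN s Hs. apply oeq_iff. unfold add_root_leaf in *.
  destruct (list_eq_dec Nat.eq_dec s [N]) as [->|Ne].
  - split; [exact I|]. intro m. unfold child_rank.
    destruct (list_eq_dec Nat.eq_dec ([N] ++ [m]) [N]) as [C|_]; [discriminate|].
    destruct (T ([N] ++ [m])) eqn:E; [|exact I].
    apply (proj1 Hw) in E. congruence.
  - eapply ord_eq_trans; [apply (rank_eq T s Hw Hs)|].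
    destruct s as [|a r].
    + assert (Hpos' : ord_lt OZ (OL (child_rank T (rank T) []))).
      { eapply ord_lt_le_trans; [exact Hpos|apply (rank_eq T [] Hw Hs)]. }
      split; apply OL_le; intro m; destruct (list_eq_dec Nat.eq_dec [m] [N]) as [E|E].
      * exists m. unfold child_rank; cbn [app]. inversion E; subst. rewrite HTN. exact I.
      * exists m. unfold child_rank; cbn [app].
        destruct (list_eq_dec Nat.eq_dec [m] [N]); [contradiction|].
        destruct (T [m]); apply ord_le_refl.
      * destruct Hpos' as [k Hk]. exists k. unfold child_rank at 1; cbn [app].
        destruct (list_eq_dec Nat.eq_dec [m] [N]); [exact Hk|contradiction].
      * exists m. unfold child_rank; cbn [app].
        destruct (list_eq_dec Nat.eq_dec [m] [N]); [contradiction|].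
        destruct (T [m]); apply ord_le_refl.
    + apply OL_eq. intro m. unfold child_rank.
      destruct (list_eq_dec Nat.eq_dec ((a :: r) ++ [m]) [N]) as [E|E].
      * exfalso. simpl in E. inversion E. destruct r; discriminate.
      * apply ord_eq_refl.
Qed.

Lemma U_add_root_leaf alpha n T N : ord_lt OZ alpha -> A alpha T -> n <= N -> T [N] = false ->
  U alpha n T (add_root_leaf T N).
Proof.
  intros Hpos HA HN HTN. pose proof HA as [Hw [H0 Ha]]%A_iff.
  assert (Hpos' : ord_lt OZ (rank T [])) by (eapply ord_lt_le_trans; [exact Hpos|apply Ha]).
  destruct (A_of_is_rank _ _ alpha (add_root_leaf_Tr T N (proj1 Hw) H0)
              (add_root_leaf_is_rank T N Hw Hpos' HTN)) as [HA' Hrank].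
  { unfold add_root_leaf. destruct (list_eq_dec Nat.eq_dec [] [N]); auto. }
  { destruct (list_eq_dec Nat.eq_dec [] [N]); [discriminate|exact Ha]. }
  assert (Hsm : forall s, small n s -> s <> [N]) by (intros s Hs ->; apply small_cons in Hs; lia).
  apply U_iff; auto. split; [exact HA'|split].
  - intros s Hs. unfold add_root_leaf. destruct (list_eq_dec Nat.eq_dec s [N]); auto.
    exfalso; apply (Hsm s); auto.
  - intros s Hs Ht. eapply ord_eq_trans; [apply Hrank|].
    + unfold add_root_leaf. destruct (list_eq_dec Nat.eq_dec s [N]); auto.
    + destruct (list_eq_dec Nat.eq_dec s [N]); [exfalso; apply (Hsm s); auto|apply ord_eq_refl].
Qed.

(* Relabelling of the children of the root: below [n] nothing moves, and from
   [n] on the old children [n, n+1, ...] go to the even offsets [n, n+2, ...]. *)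
Definition shift_label (n N : nat) : option nat :=
  if N <? n then Some N else if Nat.even (N - n) then Some (n + Nat.div2 (N - n)) else None.

Definition unshift_label (n m : nat) : nat := if m <? n then m else n + 2 * (m - n).

Lemma shift_unshift_label n m : shift_label n (unshift_label n m) = Some m.
Proof.
  unfold shift_label, unshift_label. destruct (m <? n) eqn:E; [rewrite E; reflexivity|].
  apply Nat.ltb_ge in E. destruct (n + 2 * (m - n) <? n) eqn:E2; [apply Nat.ltb_lt in E2; lia|].
  replace (n + 2 * (m - n) - n) with (2 * (m - n)) by lia.
  rewrite Nat.even_even, Nat.div2_double. f_equal. lia.
Qed.

Lemma shift_label_small n N : N < n -> shift_label n N = Some N.
Proof. intro H. unfold shift_label. apply Nat.ltb_lt in H. rewrite H. reflexivity. Qed.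

Lemma shift_label_gap n : shift_label n (S n) = None.
Proof.
  unfold shift_label. destruct (S n <? n) eqn:E; [apply Nat.ltb_lt in E; lia|].
  replace (S n - n) with 1 by lia. reflexivity.
Qed.

Definition shift_root (n : nat) (T : pt) : pt := fun s =>
  match s with
  | [] => true
  | N :: r => match shift_label n N with Some N' => T (N' :: r) | None => false end
  end.

Lemma U_shift_root alpha n T : A alpha T -> U alpha n T (shift_root n T).
Proof.
  intros HA. pose proof HA as [Hw [H0 Ha]]%A_iff.
  pose proof (rank_is_rank T Hw) as Hr. pose proof (proj1 Hw) as HTr.
  set (h' := fun s => match s with [] => rank T [] | N :: r =>
                 match shift_label n N with Some N' => rank T (N' :: r) | None => OZ end end).
  assert (HTr' : Tr (shift_root n T)).
  { intros [|N r] t H; simpl in *; auto. destruct (shift_label n N) as [N'|]; [|discriminate].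
    apply (HTr (N' :: r) t); auto. }
  assert (Hr' : is_rank (shift_root n T) h').
  { intros [|N r] Hs; apply oeq_iff.
    - simpl. eapply ord_eq_trans; [apply (is_rank_eq T (rank T) [] Hr H0)|].
      split; apply OL_le; intro m.
      + exists (unshift_label n m). unfold child_rank. simpl. rewrite shift_unshift_label.
        apply ord_le_refl.
      + unfold child_rank. simpl. destruct (shift_label n m) as [N'|].
        * exists N'. apply ord_le_refl.
        * exists 0. exact I.
    - simpl in Hs |- *. destruct (shift_label n N) as [N'|] eqn:E; [|discriminate].
      eapply ord_eq_trans; [apply (is_rank_eq T (rank T) (N' :: r) Hr Hs)|].
      apply OL_eq. intro m. unfold child_rank. simpl. apply ord_eq_refl. }
  destruct (A_of_is_rank _ h' alpha HTr' Hr' eq_refl Ha) as [HA' Hhh].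
  assert (Hwin : forall N r, small n (N :: r) -> shift_label n N = Some N)
    by (intros N r Hs; apply shift_label_small, (small_cons _ _ _ Hs)).
  apply U_iff; auto. split; [exact HA'|split].
  - intros [|N r] Hs; simpl; [auto|]. rewrite (Hwin N r Hs). reflexivity.
  - intros s Hs Ht. eapply ord_eq_trans; [apply Hhh|].
    + destruct s as [|N r]; simpl; [auto|]. rewrite (Hwin N r Hs). exact Ht.
    + destruct s as [|N r]; simpl; [apply ord_eq_refl|]. rewrite (Hwin N r Hs). apply ord_eq_refl.
Qed.

Lemma U_other alpha n T : ord_lt OZ alpha -> A alpha T -> exists T', U alpha n T T' /\ T' <> T.
Proof.
  intros Hpos HA.
  destruct (classic (exists N, n <= N /\ T [N] = false)) as [[N [HN HTN]]|Hfull].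
  - exists (add_root_leaf T N). split; [apply U_add_root_leaf; auto|].
    intro E. apply (f_equal (fun T => T [N])) in E. unfold add_root_leaf in E.
    destruct (list_eq_dec Nat.eq_dec [N] [N]); congruence.
  - exists (shift_root n T). split; [apply U_shift_root; auto|].
    intro E. apply (f_equal (fun T => T [S n])) in E. simpl in E. rewrite shift_label_gap in E.
    destruct (T [S n]) eqn:ET; [discriminate|]. apply Hfull. exists (S n). auto.
Qed.

Lemma singleton_nowhere_dense alpha T : ord_lt OZ alpha -> nowhere_dense alpha (fun T' => T' = T).
Proof.
  intros Hpos O HO [T0 HT0]. destruct (classic (O T)) as [HOT|HOT].
  - pose proof (proj1 HO T HOT) as HA. destruct (proj2 HO T HOT) as [n Hn].
    destruct (U_other alpha n T Hpos HA) as [T' [HU Hne]].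
    assert (Hs : exists s, T' s <> T s).
    { apply NNPP. intro H. apply Hne, functional_extensionality. intro s.
      apply NNPP. intro H2. apply H. eauto. }
    destruct Hs as [s Hs]. pose proof (U_A _ _ _ _ HU) as HA'.
    exists (U alpha (max n (small_bound s)) T').
    split; [apply tau_open_U; auto|split; [exists T'; apply U_refl; auto|split]].
    + intros T'' H. apply Hn. eapply U_trans; [exact HA|exact HU|].
      eapply U_mono; [exact HA'| |exact H]. lia.
    + intros T'' H ->. apply Hs. destruct (proj1 (U_iff _ _ _ _ HA') H) as [_ [Hag _]].
      symmetry. apply Hag, small_of_bound. lia.
  - exists O. split; [auto|split; [eauto|split; [intros x Hx; exact Hx|]]]. intros T' HT' ->. auto.
Qed.

Lemma borel_ext B B' : borel B -> (forall x, B x <-> B' x) -> borel B'.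
Proof.
  intros H E. replace B' with B; auto.
  apply functional_extensionality. intro x. apply propositional_extensionality, E.
Qed.

Lemma borel_empty : borel (fun _ => False).
Proof. apply borel_open. intros x []. Qed.

Lemma borel_inter (F : nat -> pset) : (forall n, borel (F n)) -> borel (fun x => forall n, F n x).
Proof.
  intro H. eapply borel_ext; [apply borel_compl, borel_union; intro n; apply borel_compl, H|].
  intro x. split.
  - intros Hn n. apply NNPP. intro H'. apply Hn. eauto.
  - intros Hn [n Hn']. apply Hn', Hn.
Qed.

Lemma borel_or B1 B2 : borel B1 -> borel B2 -> borel (fun x => B1 x \/ B2 x).
Proof.
  intros H1 H2.
  eapply borel_ext; [apply (borel_union (fun n => match n with 0 => B1 | _ => B2 end))|].
  - intros [|n]; auto.
  - intro x. split; [intros [[|n] Hn]; auto|intros [H|H]; [exists 0|exists 1]; auto].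
Qed.

Lemma borel_and B1 B2 : borel B1 -> borel B2 -> borel (fun x => B1 x /\ B2 x).
Proof.
  intros H1 H2.
  eapply borel_ext; [apply (borel_inter (fun n => match n with 0 => B1 | _ => B2 end))|].
  - intros [|n]; auto.
  - intro x. split; [intro H; split; [apply (H 0)|apply (H 1)]|intros [] [|n]; auto].
Qed.

Lemma borel_coord s b : borel (fun x : pt => x s = b).
Proof. apply borel_open. intros x Hx. exists [s]. intros y Hy. rewrite Hy; simpl; auto. Qed.

Lemma borel_coord_impl s (P : pset) : borel P -> borel (fun T => T s = true -> P T).
Proof.
  intros HP. eapply borel_ext; [apply (borel_or _ _ (borel_coord s false) HP)|].
  intro T. split; [intros [H|H] H'; auto; congruence|].
  intro H. destruct (T s); auto.
Qed.

Lemma borel_Tr_set : borel Tr.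
Proof.
  eapply borel_ext.
  - apply borel_compl, (borel_open (fun T => exists s t, T (s ++ t) = true /\ T s = false)).
    intros T [s [t [H1 H2]]]. exists [s ++ t; s]. intros y Hy. exists s, t.
    rewrite (Hy (s ++ t)), (Hy s); simpl; auto.
  - intro T. split.
    + intros H s t H1. destruct (T s) eqn:E; auto. exfalso. apply H. eauto.
    + intros H [s [t [H1 H2]]]. rewrite (H s t H1) in H2. discriminate.
Qed.

Lemma borel_singleton T : borel (fun T' => T' = T).
Proof.
  eapply borel_ext; [apply borel_compl, (borel_open (fun T' => T' <> T))|].
  - intros x Hx. assert (Hs : exists s, x s <> T s).
    { apply NNPP. intro H. apply Hx, functional_extensionality. intro s.
      apply NNPP. intro H2. apply H. eauto. }
    destruct Hs as [s Hs]. exists [s]. intros y Hy ->. apply Hs. symmetry. apply Hy. left; auto.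
  - intro x. split; [apply NNPP|intros -> H; apply H; auto].
Qed.

Lemma Istar_sigma_ideal : sigma_ideal_on_Tr Istar.
Proof.
  split; [|split; [|split]].
  - intros X [B [[_ HB] [HX _]]] T HT. auto.
  - exists (fun _ => False). split; [split; [apply borel_empty|intros x []]|].
    split; [intros x []|]. intros alpha _. eapply meager_subset; [|apply meager_empty].
    intros T [[] _].
  - intros X Y [B [HB [HY HM]]] HXY. exists B. split; auto. split; auto. intros x Hx; auto.
  - intros F HF. apply choice in HF as [Bn HB].
    exists (fun T => exists n, Bn n T). split; [split|split].
    + apply borel_union. intro n. apply (HB n).
    + intros T [n Hn]. apply (proj2 (proj1 (HB n))); auto.
    + intros T [n Hn]. exists n. apply (HB n); auto.
    + intros alpha Ha.
      eapply meager_subset; [|apply (meager_union alpha (fun n T => Bn n T /\ A alpha T))].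
      * intros T [[n Hn] HA]. exists n. auto.
      * intro n. apply (HB n); auto.
Qed.

Lemma Istar_borel_generated : borel_generated Istar.
Proof.
  intros X [B [HB [HX HM]]]. exists B. split; auto. split; auto.
  exists B. split; auto. split; auto. intros x Hx; auto.
Qed.

Lemma Istar_nontrivial : nontrivial Istar.
Proof.
  assert (Hone : olt OZ (OS OZ)) by (apply olt_iff; exact I).
  split.
  - intros [B [HB [HTr HM]]]. apply (A_not_meager (OS OZ)).
    eapply meager_subset; [|apply (HM _ Hone)]. intros T HT. split; auto.
    apply HTr, (proj1 (A_Trw _ _ HT)).
  - intros T HT. exists (fun T' => T' = T). split; [split; [apply borel_singleton|intros x ->; exact HT]|].
    split; [intros x Hx; exact Hx|]. intros alpha Ha. exists (fun _ T' => T' = T). split.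
    + intro. apply singleton_nowhere_dense, olt_iff, Ha.
    + intros T' [H _]. exists 0. exact H.
Qed.

(** * Failure of ccc *)

Fixpoint rank_lt_set (b : Ord) : list nat -> pset :=
  match b with
  | OZ => fun _ _ => False
  | OS b' => fun s T => forall m, T (s ++ [m]) = true -> rank_lt_set b' (s ++ [m]) T
  | OL f => fun s T => exists k, rank_lt_set (f k) s T
  end.

Lemma rank_lt_set_borel b : forall s, borel (rank_lt_set b s).
Proof.
  induction b as [|b IH|f IH]; intro s; simpl.
  - apply borel_empty.
  - apply (borel_inter (fun m T => T (s ++ [m]) = true -> rank_lt_set b (s ++ [m]) T)).
    intro m. apply borel_coord_impl, IH.
  - apply (borel_union (fun k => rank_lt_set (f k) s)). intro k. apply IH.
Qed.

Lemma rank_lt_set_iff T b : Trw T -> forall s, T s = true ->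
  (rank_lt_set b s T <-> ord_lt (rank T s) b).
Proof.
  intro Hw. induction b as [|b IH|f IH]; intros s Hs.
  - simpl. split; [tauto|apply ord_lt_OZ].
  - rewrite ord_lt_OS. destruct (rank_eq T s Hw Hs) as [E1 E2]. simpl. split.
    + intro H. eapply ord_le_trans; [exact E1|]. intro m. unfold child_rank.
      destruct (T (s ++ [m])) eqn:Em; [|exact I]. apply IH, H; auto.
    + intros H m Hm. apply IH; auto. pose proof (ord_le_trans _ _ _ E2 H m) as H2.
      unfold child_rank in H2. rewrite Hm in H2. exact H2.
  - rewrite ord_lt_OL. simpl. split; intros [k Hk]; exists k; apply IH; auto.
Qed.

Lemma rank_lt_set_no_branch T (f : nat -> nat) : (forall n, T (map f (seq 0 n)) = true) ->
  forall b s, s = map f (seq 0 (length s)) -> ~ rank_lt_set b s T.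
Proof.
  intros Hf b. induction b as [|b IH|g IH]; intros s Hs H; simpl in H.
  - exact H.
  - assert (Hsm : s ++ [f (length s)] = map f (seq 0 (length (s ++ [f (length s)])))).
    { rewrite length_app, Nat.add_1_r, seq_S, map_app, <- Hs. reflexivity. }
    apply (IH _ Hsm), H. rewrite Hsm. apply Hf.
  - destruct H as [k Hk]. exact (IH k s Hs Hk).
Qed.

Lemma A_iff_rank_sets a T : A a T <->
  Tr T /\ T [] = true /\ rank_lt_set (OS a) [] T /\ ~ rank_lt_set a [] T.
Proof.
  split.
  - intro HA. pose proof HA as [Hw [H0 [E1 E2]]]%A_iff.
    split; [apply Hw|split; [exact H0|]]. rewrite !rank_lt_set_iff by auto. split; [exact E1|].
    intro H. apply (ord_lt_irrefl a). eapply ord_le_lt_trans; eauto.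
  - intros [HT [H0 [Hle Hnlt]]].
    assert (Hw : Trw T).
    { split; [exact HT|]. intros [f Hf]. apply (rank_lt_set_no_branch T f Hf (OS a) [] eq_refl Hle). }
    apply A_iff. split; [exact Hw|split; [exact H0|]].
    rewrite rank_lt_set_iff in Hle, Hnlt by auto.
    split; [exact Hle|]. destruct (ord_le_lt_total a (rank T [])); tauto.
Qed.

Lemma A_borel a : borel_Tr (A a).
Proof.
  split; [|intros T HA; apply (A_Trw a), HA].
  eapply borel_ext; [|intro T; symmetry; apply A_iff_rank_sets].
  apply borel_and; [apply borel_Tr_set|apply borel_and; [apply borel_coord|]].
  apply borel_and; [apply rank_lt_set_borel|apply borel_compl, rank_lt_set_borel].
Qed.

Lemma A_disjoint a b T : A a T -> A b T -> ord_eq a b.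
Proof.
  intros [_ [_ Ha]]%A_iff [_ [_ Hb]]%A_iff. eapply ord_eq_trans; [apply ord_eq_sym|]; eauto.
Qed.

Lemma A_not_Istar a : olt OZ a -> ~ Istar (A a).
Proof.
  intros Ha [B [_ [HAB HM]]]. apply (A_not_meager a).
  eapply meager_subset; [|apply (HM a Ha)]. intros T HT. auto.
Qed.

Definition ord_repr (a : Ord) : Ord := epsilon (inhabits OZ) (fun x => ord_eq x a).

Lemma ord_repr_eq a : ord_eq (ord_repr a) a.
Proof. unfold ord_repr. apply epsilon_spec. exists a. apply ord_eq_refl. Qed.

Lemma ord_repr_ext a b : ord_eq a b -> ord_repr a = ord_repr b.
Proof.
  intro E. unfold ord_repr. f_equal. apply functional_extensionality. intro x.
  apply propositional_extensionality. split; intro H; eapply ord_eq_trans; eauto using ord_eq_sym.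
Qed.

Definition pos_ord := {a : Ord | olt OZ a /\ ord_repr a = a}.

(* [omega_1] is not countable: every sequence of countable ordinals is bounded. *)
Lemma pos_ord_uncountable (g : pos_ord -> nat) : ~ forall i j, g i = g j -> i = j.
Proof.
  intro Hg.
  set (elem := fun n => epsilon (inhabits OZ) (fun a => exists j : pos_ord, g j = n /\ proj1_sig j = a)).
  set (sigma := ord_repr (OS (OL (fun n => OS (elem n))))).
  assert (Hs1 : olt OZ sigma).
  { apply olt_iff. eapply ord_lt_le_trans; [|apply (proj2 (ord_repr_eq _))]. exact I. }
  assert (Hs2 : ord_repr sigma = sigma) by apply ord_repr_ext, ord_repr_eq.
  set (js := exist _ sigma (conj Hs1 Hs2) : pos_ord).
  assert (He : exists j : pos_ord, g j = g js /\ proj1_sig j = elem (g js)).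
  { unfold elem. apply epsilon_spec. exists (proj1_sig js), js. auto. }
  destruct He as [j [Hj1 Hj2]]. apply Hg in Hj1. subst j. simpl in Hj2.
  apply (ord_lt_irrefl sigma). eapply ord_lt_le_trans; [|apply (proj2 (ord_repr_eq _))].
  rewrite ord_lt_OS. apply ord_ltW. exists (g js). rewrite <- Hj2. apply ord_lt_succ.
Qed.

Lemma Istar_not_ccc : ~ ccc Istar.
Proof.
  intro Hc. destruct (Hc pos_ord (fun j => A (proj1_sig j))) as [g Hg].
  - intro j. split; [apply A_borel|apply A_not_Istar, (proj2_sig j)].
  - intros [a [Ha Hra]] [b [Hb Hrb]] Hne T [H1 H2]. simpl in *. apply Hne.
    pose proof (ord_repr_ext a b (A_disjoint a b T H1 H2)) as E.
    assert (a = b) by congruence. subst b. f_equal. apply proof_irrelevance.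
  - exact (pos_ord_uncountable g Hg).
Qed.

(** * The [omega_2]-chain condition *)

Fixpoint ord_enum (a : Ord) (k : nat) : Ord :=
  match a with
  | OZ => OZ
  | OS b => match k with 0 => OS b | S k => ord_enum b k end
  | OL f => match k with 0 => OL f | S k => let (i, j) := of_nat k in ord_enum (f i) j end
  end.

Lemma ord_enum_complete a : forall b, ord_le b a -> exists k, ord_eq b (ord_enum a k).
Proof.
  induction a as [|a IH|f IH]; intros b H.
  - exists 0. split; [auto|exact I].
  - destruct (classic (ord_le b a)) as [H1|H1].
    + destruct (IH b H1) as [k Hk]. exists (S k). exact Hk.
    + exists 0. split; [auto|apply ord_not_le_lt, H1].
  - destruct (classic (exists i, ord_le b (f i))) as [[i Hi]|Hn].
    + destruct (IH i b Hi) as [j Hj]. exists (S (to_nat (i, j))).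
      change (ord_eq b (let (i', j') := of_nat (to_nat (i, j)) in ord_enum (f i') j')).
      rewrite cancel_of_to. exact Hj.
    + exists 0. split; [exact H|]. intro i. apply ord_ltW, ord_not_le_lt. intro; apply Hn; eauto.
Qed.

Definition ord_index (a b : Ord) : nat := epsilon (inhabits 0) (fun k => ord_eq b (ord_enum a k)).

Lemma ord_index_spec a b : ord_le b a -> ord_eq b (ord_enum a (ord_index a b)).
Proof. intro H. unfold ord_index. apply epsilon_spec, ord_enum_complete, H. Qed.

(* A finite code of the basic open set [U(n,T)] of [tau_alpha]: membership and
   rank of [T] on the window, ranks being indexed below [alpha]. *)
Definition window_code (a : Ord) (n : nat) (T : pt) : list nat :=
  map (fun s => if T s then S (ord_index (ord_repr a) (rank T s)) else 0) (window n).

Lemma window_code_ord_eq a b n T : ord_eq a b -> window_code a n T = window_code b n T.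
Proof. intro E. unfold window_code. rewrite (ord_repr_ext a b E). reflexivity. Qed.

Lemma window_code_U a n T1 T2 : A a T1 -> A a T2 ->
  window_code a n T1 = window_code a n T2 -> U a n T1 T2.
Proof.
  intros H1 H2 E. unfold window_code in E. rewrite map_ext_in_iff in E. apply U_iff; auto.
  split; [exact H2|split].
  - intros s Hs. apply In_window in Hs. specialize (E s Hs). simpl in E.
    destruct (T1 s), (T2 s); congruence.
  - intros s Hs Ht. apply In_window in Hs. specialize (E s Hs). simpl in E. rewrite Ht in E.
    destruct (T2 s) eqn:Ht2; [|discriminate]. injection E as E.
    assert (R : ord_le a (ord_repr a)) by apply (ord_repr_eq a).
    pose proof (ord_index_spec (ord_repr a) (rank T1 s)
                  (ord_le_trans _ _ _ (rank_le_A a T1 s H1 Ht) R)) as C1.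
    pose proof (ord_index_spec (ord_repr a) (rank T2 s)
                  (ord_le_trans _ _ _ (rank_le_A a T2 s H2 Ht2) R)) as C2.
    rewrite E in C1. eapply ord_eq_trans; [exact C2|apply ord_eq_sym, C1].
Qed.

Fixpoint list_code (l : list nat) : nat :=
  match l with [] => 0 | x :: l => S (to_nat (x, list_code l)) end.

Lemma list_code_inj l1 l2 : list_code l1 = list_code l2 -> l1 = l2.
Proof.
  revert l2. induction l1 as [|x l1 IH]; intros [|y l2] H; cbn [list_code] in H; try discriminate; auto.
  assert (H' : to_nat (x, list_code l1) = to_nat (y, list_code l2)) by (injection H; auto).
  apply (f_equal of_nat) in H'. rewrite !cancel_of_to in H'.
  injection H' as -> H'. f_equal. apply IH, H'.
Qed.

(* An injection of [omega_1 x omega] into [omega_1]: [(a, c) |-> a * omega + c]. *)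
Fixpoint iterS (k : nat) (x : Ord) : Ord := match k with 0 => x | S k => OS (iterS k x) end.

Fixpoint mul_omega (a : Ord) : Ord :=
  match a with
  | OZ => OZ
  | OS b => OL (fun k => iterS k (mul_omega b))
  | OL f => OL (fun k => mul_omega (f k))
  end.

Definition ord_pair (a : Ord) (c : nat) : Ord := iterS c (mul_omega a).

Lemma iterS_mono k x y : ord_le x y -> ord_le (iterS k x) (iterS k y).
Proof. induction k; simpl; auto. Qed.

Lemma iterS_le k k' x : k <= k' -> ord_le (iterS k x) (iterS k' x).
Proof. induction 1; [apply ord_le_refl|]. eapply ord_le_trans; [exact IHle|apply ord_le_succ]. Qed.

Lemma iterS_lt k k' x : k < k' -> ord_lt (iterS k x) (iterS k' x).
Proof. intro H. apply (iterS_le (S k) k'). lia. Qed.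

Lemma mul_omega_mono a b : ord_le a b -> ord_le (mul_omega a) (mul_omega b).
Proof.
  intros H%ole_iff. induction H; simpl.
  - exact I.
  - eapply ord_le_trans; eauto.
  - apply OL_le. intro k. exists k. apply iterS_mono; auto.
  - eapply ord_le_cocone. exact IHole.
  - exact H0.
Qed.

Lemma ord_pair_lt a a' c c' : ord_lt a a' -> ord_lt (ord_pair a c) (ord_pair a' c').
Proof.
  intro H. unfold ord_pair. eapply ord_lt_le_trans; [|apply (iterS_le 0 c'); lia]. simpl.
  eapply ord_lt_le_trans; [|apply (mul_omega_mono (OS a) a' H)]. simpl.
  exists (S c). apply ord_lt_succ.
Qed.

Lemma ord_pair_inj a a' c c' : ord_eq (ord_pair a c) (ord_pair a' c') -> ord_eq a a' /\ c = c'.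
Proof.
  intro E. assert (Ha : ord_eq a a').
  { apply NNPP. intro Hne. destruct (ord_neq_lt a a' Hne) as [H|H].
    - apply (ord_lt_not_le _ _ (ord_pair_lt a a' c c' H)), E.
    - apply (ord_lt_not_le _ _ (ord_pair_lt a' a c' c H)), E. }
  split; [exact Ha|].
  assert (Em : ord_eq (ord_pair a' c') (ord_pair a c')).
  { unfold ord_pair. split; apply iterS_mono, mul_omega_mono, Ha. }
  destruct (Nat.lt_trichotomy c c') as [H|[H|H]]; auto; exfalso.
  - apply (ord_lt_not_le _ _ (iterS_lt c c' (mul_omega a) H)).
    eapply ord_le_trans; [apply (proj2 Em)|apply (proj2 E)].
  - apply (ord_lt_not_le _ _ (iterS_lt c' c (mul_omega a) H)).
    eapply ord_le_trans; [apply (proj1 E)|apply (proj1 Em)].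
Qed.

Definition comeager_in (F : pset) (x : Ord * pt * nat) : Prop :=
  let '(a, T, n) := x in olt OZ a /\ A a T /\ meager a (fun T' => U a n T T' /\ ~ F T').

Lemma comeager_in_exists F : borel_Tr F -> ~ Istar F -> exists x, comeager_in F x.
Proof.
  intros HB HnI.
  assert (H : exists a, olt OZ a /\ ~ meager a (fun T => F T /\ A a T)).
  { apply NNPP. intro H. apply HnI. exists F. split; [auto|split; [intros x Hx; exact Hx|]].
    intros a Ha. apply NNPP. intro H2. apply H. eauto. }
  destruct H as [a [Ha Hnm]].
  destruct (borel_not_meager_local a F (proj1 HB) Hnm) as [T [n [HA HM]]].
  exists (a, T, n). simpl. auto.
Qed.

Lemma Istar_omega2_cc : omega2_cc Istar.
Proof.
  intros J F HF Hint.
  assert (Hx : forall j, exists x, comeager_in (F j) x) by (intro j; apply comeager_in_exists; apply HF).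
  apply choice in Hx as [x Hx].
  exists (fun j => let '(a, T, n) := x j in ord_pair a (to_nat (n, list_code (window_code a n T)))).
  intros i j E. apply NNPP. intro Hne.
  pose proof (Hx i) as Hi. pose proof (Hx j) as Hj.
  destruct (x i) as [[ai Ti] ni], (x j) as [[aj Tj] nj]. simpl in Hi, Hj.
  destruct Hi as [Hai [HAi HMi]], Hj as [Haj [HAj HMj]].
  apply oeq_iff, ord_pair_inj in E as [Ea Ec]. apply (f_equal of_nat) in Ec.
  rewrite !cancel_of_to in Ec.
  assert (En : ni = nj) by exact (f_equal fst Ec). subst nj.
  assert (Ed : list_code (window_code ai ni Ti) = list_code (window_code aj ni Tj))
    by exact (f_equal snd Ec).
  apply list_code_inj in Ed.
  rewrite <- (window_code_ord_eq ai aj ni Tj Ea) in Ed.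
  assert (HAj' : A ai Tj) by (eapply A_ord_eq; [apply ord_eq_sym|]; eauto).
  assert (HU : U ai ni Ti Tj) by (apply window_code_U; auto).
  destruct (Hint i j Hne) as [B [HB [HsB HMB]]].
  apply (open_not_meager ai (U ai ni Tj)); [apply tau_open_U; auto|exists Tj; apply U_refl; auto|].
  eapply meager_subset; [|apply (meager_union2 ai _ _ (meager_union2 ai _ _ HMi
    (meager_ord_eq aj ai _ (ord_eq_sym _ _ Ea) HMj)) (HMB ai Hai))].
  intros T HT. destruct (classic (F i T)) as [Fi|Fi]; [destruct (classic (F j T)) as [Fj|Fj]|].
  - right. split; [apply HsB; split; auto|eapply U_A; eauto].
  - left. right. split; auto. eapply U_ord_eq; eauto.
  - left. left. split; auto. eapply U_trans; eauto.
Qed.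

Theorem proposition5p4 :
  sigma_ideal_on_Tr Istar /\ nontrivial Istar /\ borel_generated Istar /\
  ~ ccc Istar /\ omega2_cc Istar.
Proof.
  split; [exact Istar_sigma_ideal|].
  split; [exact Istar_nontrivial|].
  split; [exact Istar_borel_generated|].
  split; [exact Istar_not_ccc|exact Istar_omega2_cc].
Qed.
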